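(* Let $L$ be a finite set with $|L|=n$. Then: (a) the refinement relation $\preceq$ on $\tilde P_{\mathrm I}$ is a partial order; (b) $\{s(\mathbf A):\mathbf A\in P_{\mathrm{II}}\}$ equals the set $\tilde P_{\mathrm{II}}$ of nonempty down-sets of $(\tilde P_{\mathrm I},\preceq)$, and for all $\tilde{\mathbf A},\tilde{\mathbf B}\in\tilde P_{\mathrm{II}}$: there exist $\mathbf A,\mathbf B\in P_{\mathrm{II}}$ with $s(\mathbf A)=\tilde{\mathbf A}$, $s(\mathbf B)=\tilde{\mathbf B}$ and $\mathbf B\subseteq\mathbf A$ if and only if $\tilde{\mathbf B}\subseteq\tilde{\mathbf A}$; (c) $\{s(\mathfrak A):\mathfrak A\in P_{\mathrm{III}}\}$ equals the set of nonempty up-sets of $(\tilde P_{\mathrm{II}},\subseteq)$, and for all nonempty up-sets $\tilde{\mathfrak A},\tilde{\mathfrak B}$ of $(\tilde P_{\mathrm{II}},\subseteq)$: there exist $\mathfrak A,\mathfrak B\in P_{\mathrm{III}}$ with $s(\mathfrak A)=\tilde{\mathfrak A}$, $s(\mathfrak B)=\tilde{\mathfrak B}$ and $\mathfrak B\subseteq\mathfrak A$ if and only if $\tilde{\mathfrak B}\subseteq\tilde{\mathfrak A}$.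
   Context: A set partition of $L$ is a set $\xi$ of nonempty, pairwise disjoint subsets of $L$ whose union is $L$; $P_{\mathrm I}$ is the set of set partitions of $L$, with refinement $\upsilon\preceq\xi$ iff every $Y\in\upsilon$ is contained in some $X\in\xi$. An integer partition of $n$ is a finite multiset of positive integers summing to $n$; $\tilde P_{\mathrm I}$ is the set of integer partitions of $n$. The type map is $s(\xi)=$ the multiset $\{|X|:X\in\xi\}$. Refinement on $\tilde P_{\mathrm I}$: $\tilde\upsilon\preceq\tilde\xi$ iff there exist $\upsilon,\xi\in P_{\mathrm I}$ with $s(\upsilon)=\tilde\upsilon$, $s(\xi)=\tilde\xi$, $\upsilon\preceq\xi$. A down-set (resp. up-set) of a poset is a subset closed downward (resp. upward). $P_{\mathrm{II}}$ is the set of nonempty down-sets of $(P_{\mathrm I},\preceq)$, ordered by inclusion; $P_{\mathrm{III}}$ is the set of nonempty up-sets of $(P_{\mathrm{II}},\subseteq)$, ordered by inclusion. $s$ acts elementwise on these: for $\mathbf A\in P_{\mathrm{II}}$, $s(\mathbf A)=\{s(\xi):\xi\in\mathbf A\}$ (a set), and for $\mathfrak A\in P_{\mathrm{III}}$, $s(\mathfrak A)=\{s(\mathbf A):\mathbf A\in\mathfrak A\}$. *)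

From mathcomp Require Import all_boot.
Set Implicit Arguments. Unset Strict Implicit. Unset Printing Implicit Defensive.

Definition setparts (L : finType) : {set {set {set L}}} :=
  [set P : {set {set L}} | partition P [set: L]].

Definition refines (L : finType) (u x : {set {set L}}) : bool :=
  [forall Y in u, [exists X in x, Y \subset X]].

(* An integer partition (multiset of positive integers) of n is encoded by
   its multiplicity function m : k |-> (number of parts equal to k),
   for k = 0..n (all parts are <= n); m 0 = 0 (parts are positive), and
   sum_k k * m k = n. *)
Definition IP (n : nat) := {ffun 'I_n.+1 -> 'I_n.+1}.

Definition intparts (n : nat) : {set IP n} :=
  [set m : IP n | (m ord0 == ord0) && (\sum_(k < n.+1) (k * m k)%N == n)].

(* The type map s: the multiset {|X| : X in xi}, as a multiplicity function.
   (When |L| = n, all the counts are <= n, so [inord] does not truncate.) *)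
Definition ptype (L : finType) (n : nat) (xi : {set {set L}}) : IP n :=
  [ffun k : 'I_n.+1 => inord #|[set X in xi | #|X| == k]|].

Definition irefines (L : finType) (n : nat) (a b : IP n) : bool :=
  [exists u in setparts L, exists x in setparts L,
     [&& ptype n u == a, ptype n x == b & refines u x]].

Definition is_downset (T : finType) (S : {set T}) (le : rel T) (D : {set T}) : bool :=
  (D \subset S) && [forall x in D, forall y in S, le y x ==> (y \in D)].

Definition is_upset (T : finType) (S : {set T}) (le : rel T) (U : {set T}) : bool :=
  (U \subset S) && [forall x in U, forall y in S, le x y ==> (y \in U)].

Definition subset_rel (T : finType) : rel {set T} := fun A B => A \subset B.

Definition ne_downsets (T : finType) (S : {set T}) (le : rel T) : {set {set T}} :=
  [set D : {set T} | (D != set0) && is_downset S le D].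

Definition ne_upsets (T : finType) (S : {set T}) (le : rel T) : {set {set T}} :=
  [set U : {set T} | (U != set0) && is_upset S le U].

Definition PII (L : finType) : {set {set {set {set L}}}} :=
  ne_downsets (setparts L) (@refines L).

Definition PIII (L : finType) : {set {set {set {set {set L}}}}} :=
  ne_upsets (PII L) (@subset_rel _).

Definition ptypeII (L : finType) (n : nat) (A : {set {set {set L}}}) : {set IP n} :=
  [set ptype n xi | xi in A].

Definition ptypeIII (L : finType) (n : nat) (F : {set {set {set {set L}}}})
  : {set {set IP n}} :=
  [set ptypeII n A | A in F].

Definition PtII (L : finType) (n : nat) : {set {set IP n}} :=
  ne_downsets (intparts n) (@irefines L n).

Definition PtIII (L : finType) (n : nat) : {set {set {set IP n}}} :=
  ne_upsets (PtII L n) (@subset_rel _).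

(* The type map [ptype n] sends a set partition of L (with #|L| = n) to its
   integer partition of block sizes.  Everything rests on two facts about it:
   - it is onto the integer partitions of n (any multiset of positive sizes
     summing to #|L| is realised by cutting L into blocks), and
   - two set partitions of the same type differ by a relabelling of L; since
     relabelling preserves refinement, a refinement a <= ptype x of integer
     partitions lifts to a refinement u <= x of set partitions with ptype u = a.
   Part (a) follows: reflexivity and transitivity by lifting, antisymmetry
   because a proper refinement strictly increases the number of blocks.
   Parts (b) and (c) are two instances of one order-theoretic transfer
   principle: a monotone map f from (S, le) onto (St, lt) that lifts
   lt-predecessors to le-predecessors maps the nonempty down-sets of S onto
   those of St, reflecting inclusion.  Level II is the instance f = ptype n;
   level III is the instance f = ptypeII n on P_II with the reversed
   inclusion order (up-sets are down-sets of the reversed order), the lifting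
   property being supplied by the level II instance itself. *)

From mathcomp Require Import all_boot zify.
Set Implicit Arguments. Unset Strict Implicit. Unset Printing Implicit Defensive.

(* Two sets whose fibres over key functions have equal sizes are related by a
   key-preserving bijection; used to match blocks by size, then points. *)
Lemma fibre_matching (T : finType) (K : eqType) (A B : {set T}) (kA kB : T -> K) :
  (forall k, #|[set a in A | kA a == k]| = #|[set b in B | kB b == k]|) ->
  exists g : T -> T,
   [/\ {in A, forall a, g a \in B /\ kB (g a) = kA a}, {in A &, injective g} &
       forall b, b \in B -> exists2 a, a \in A & g a = b].
Proof.
move=> hc.
pose g a := nth a (enum [set b in B | kB b == kA a])
                  (index a (enum [set a' in A | kA a' == kA a])).
have gin : {in A, forall a, g a \in [set b in B | kB b == kA a]}.
  move=> a aA; rewrite -mem_enum /g; apply: mem_nth.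
  by rewrite -cardE -hc cardE index_mem mem_enum inE aA eqxx.
exists g; split.
- by move=> a aA; have := gin a aA; rewrite inE => /andP[-> /eqP ->].
- move=> a1 a2 a1A a2A e.
  have k12 : kA a1 = kA a2.
    have := gin a1 a1A; have := gin a2 a2A; rewrite !inE -e.
    by move=> /andP[_ /eqP ->] /andP[_ /eqP ->].
  move: e; rewrite /g k12.
  set SA := [set a' in A | kA a' == kA a2]; set SB := [set b in B | kB b == kA a2].
  have i1 : a1 \in SA by rewrite inE a1A k12 eqxx.
  have i2 : a2 \in SA by rewrite inE a2A eqxx.
  have s1 : index a1 (enum SA) < size (enum SB) by rewrite -cardE -hc cardE index_mem mem_enum.
  have s2 : index a2 (enum SA) < size (enum SB) by rewrite -cardE -hc cardE index_mem mem_enum.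
  rewrite (set_nth_default a2 a1 s1) => /eqP; rewrite nth_uniq ?enum_uniq // => /eqP e.
  by rewrite -[a1](nth_index a1 (s := enum SA)) ?mem_enum // e nth_index ?mem_enum.
- move=> b bB.
  set SA := [set a' in A | kA a' == kB b]; set SB := [set b' in B | kB b' == kB b].
  have ib : index b (enum SB) < size (enum SA).
    by rewrite -cardE hc cardE index_mem mem_enum inE bB eqxx.
  have aS : nth b (enum SA) (index b (enum SB)) \in SA by rewrite -mem_enum mem_nth.
  exists (nth b (enum SA) (index b (enum SB))); first by move: aS; rewrite inE => /andP[].
  move: aS; rewrite {1}inE => /andP[_ /eqP ka].
  rewrite /g ka -/SA -/SB index_uniq ?enum_uniq //.
  have ib' : index b (enum SB) < size (enum SB) by rewrite index_mem mem_enum inE bB eqxx.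
  by rewrite (set_nth_default b) // nth_index // mem_enum inE bB eqxx.
Qed.

Lemma subset_of_card (T : finType) (S : {set T}) k : k <= #|S| ->
  exists2 X : {set T}, X \subset S & #|X| = k.
Proof.
move=> kS; exists [set x in take k (enum S)].
  by apply/subsetP => x; rewrite inE => /mem_take; rewrite mem_enum.
rewrite cardsE; move/card_uniqP: (take_uniq k (enum_uniq (mem S))) => ->.
by rewrite size_takel // -cardE.
Qed.

Definition nblocks (T : finType) (P : {set {set T}}) (k : nat) : nat :=
  #|[set X in P | #|X| == k]|.

Lemma partition_with_sizes (T : finType) (s : seq nat) (S : {set T}) :
  all (leq 1) s -> sumn s = #|S| ->
  exists2 P, partition P S & forall k, nblocks P k = count_mem k s.
Proof.
elim: s S => [|k s IH] S /=.
  move=> _ /esym /eqP; rewrite cards_eq0 => /eqP ->.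
  exists set0; first by rewrite partition_set0.
  by move=> j; apply/eqP; rewrite cards_eq0; apply/eqP/setP => Y; rewrite !inE.
case/andP=> k1 alls hsum.
have [X XS cX] : exists2 X : {set T}, X \subset S & #|X| = k.
  by apply: subset_of_card; rewrite -hsum leq_addr.
have [P pP cP] : exists2 P, partition P (S :\: X) & forall j, nblocks P j = count_mem j s.
  by apply: IH => //; rewrite cardsD (setIidPr XS) cX -hsum; lia.
have X0 : X != set0 by rewrite -card_gt0 cX.
have dX : [disjoint X & S :\: X].
  by rewrite -setI_eq0; apply/eqP/setP => y; rewrite !inE; case: (y \in X).
have XnP : X \notin P.
  apply/negP => /(partitionS pP) sub; case/set0Pn: X0 => y yX.
  by have := subsetP sub y yX; rewrite !inE yX.
exists (X |: P).
  have -> : S = X :|: S :\: X by rewrite setDE setUIr setUCr setIT (setUidPr XS).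
  exact: partitionU1.
move=> j; rewrite -cP /nblocks -cX.
case: (boolP (#|X| == j)) => hj.
  have -> : [set Y in X |: P | #|Y| == j] = X |: [set Y in P | #|Y| == j].
    by apply/setP => Y; rewrite !inE; case: (boolP (Y == X)) => [/eqP->|].
  by rewrite cardsU1 inE (negbTE XnP).
have -> : [set Y in X |: P | #|Y| == j] = [set Y in P | #|Y| == j].
  apply/setP => Y; rewrite !inE; case: (boolP (Y == X)) => [/eqP->|] //=.
  by rewrite (negbTE hj) andbF.
by [].
Qed.

Section Partitions.
Variable L : finType.
Implicit Types (P u x y : {set {set L}}) (s : L -> L).

Lemma part_pblock_mem P l : partition P [set: L] -> pblock P l \in P.
Proof. by move=> pP; apply: pblock_mem; rewrite (cover_partition pP) inE. Qed.

Lemma part_mem_pblock P l : partition P [set: L] -> l \in pblock P l.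
Proof. by move=> pP; rewrite mem_pblock (cover_partition pP) inE. Qed.

Lemma part_pblockE P l Y : partition P [set: L] -> Y \in P ->
  (pblock P l == Y) = (l \in Y).
Proof.
move=> pP YP; apply/eqP/idP => [<-|lY]; first exact: part_mem_pblock.
exact: def_pblock (partition_trivIset pP) YP lY.
Qed.

Lemma part_card P : partition P [set: L] -> #|P| <= #|L|.
Proof.
move=> pP; rewrite -cardsT (card_partition pP) -sum1_card.
by apply: leq_sum => X XP; rewrite card_gt0 (partition_neq0 pP XP).
Qed.

Lemma refines_refl u : refines u u.
Proof. by apply/forall_inP => Y Yu; apply/exists_inP; exists Y. Qed.

Lemma refines_trans u x y : refines u x -> refines x y -> refines u y.
Proof.
move=> /forall_inP h1 /forall_inP h2; apply/forall_inP => Y Yu.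
have /exists_inP [X Xx YX] := h1 Y Yu.
have /exists_inP [Z Zy XZ] := h2 X Xx.
by apply/exists_inP; exists Z => //; apply: subset_trans XZ.
Qed.

Lemma coarsening_map u x : partition u [set: L] -> partition x [set: L] ->
  refines u x -> exists h : {set L} -> {set L},
  [/\ {in u, forall Y : {set L}, Y \subset h Y}, forall l, h (pblock u l) = pblock x l
    & h @: u = x].
Proof.
move=> pu px /forall_inP r.
pose h (Y : {set L}) := odflt set0 [pick X in x | Y \subset X].
have hP Y : Y \in u -> h Y \in x /\ Y \subset h Y.
  move=> Yu; rewrite /h; case: pickP => [X /andP[Xx YX] | none] //=.
  by have /exists_inP [X Xx YX] := r Y Yu; move: (none X); rewrite Xx YX.
have hl l : h (pblock u l) = pblock x l.
  case: (hP _ (part_pblock_mem l pu)) => hx hs.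
  by apply/esym/eqP; rewrite part_pblockE //; apply: (subsetP hs); apply: part_mem_pblock.
exists h; split => //; first by move=> Y /hP[].
apply/eqP; rewrite eqEsubset; apply/andP; split.
  by apply/subsetP => _ /imsetP[Y /hP[hx _] ->].
apply/subsetP => X Xx; case/set0Pn: (partition_neq0 px Xx) => l lX.
apply/imsetP; exists (pblock u l); first exact: part_pblock_mem.
by rewrite hl; apply/esym/eqP; rewrite part_pblockE.
Qed.

Lemma refines_card u x : partition u [set: L] -> partition x [set: L] ->
  refines u x -> #|x| <= #|u| /\ (#|u| = #|x| -> u = x).
Proof.
move=> pu px r; have [h [hsub hl hux]] := coarsening_map pu px r.
split; first by rewrite -hux leq_imset_card.
move=> e; have /imset_injP hinj : #|h @: u| == #|u| by rewrite hux e.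
have xu : x \subset u.
  apply/subsetP => X; rewrite -{1}hux => /imsetP [Y Yu ->].
  suff -> : h Y = Y by [].
  apply/eqP; rewrite eqEsubset hsub // andbT; apply/subsetP => l lhY.
  have -> : Y = pblock u l.
    apply: hinj; rewrite ?part_pblock_mem // hl; apply/esym/eqP; rewrite part_pblockE //.
    by rewrite -hux; apply: imset_f.
  exact: part_mem_pblock.
by apply/esym/eqP; rewrite eqEcard xu e leqnn.
Qed.

Definition relabel s P : {set {set L}} := [set s @: (Y : {set L}) | Y in P].

Lemma relabel_partition s P : injective s ->
  partition P [set: L] -> partition (relabel s P) [set: L].
Proof.
move=> si pP; have sT : s @: [set: L] = [set: L].
  by apply/eqP; rewrite eqEcard subsetT /= card_imset.
by rewrite /relabel -sT imset_partition.
Qed.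

Lemma relabel_nblocks s P k : injective s -> nblocks (relabel s P) k = nblocks P k.
Proof.
move=> si; rewrite /nblocks.
have -> : [set X in relabel s P | #|X| == k] = relabel s [set Y in P | #|Y| == k].
  apply/setP => X; apply/idP/imsetP => [|[Y]].
    rewrite inE => /andP[/imsetP[Y YP ->] hk]; rewrite card_imset // in hk.
    by exists Y => //; rewrite inE YP.
  by move=> /setIdP[YP hk] ->; rewrite inE card_imset // hk andbT; apply: imset_f.
by rewrite card_imset //; apply: imset_inj.
Qed.

Lemma relabel_refines s u x : refines u x -> refines (relabel s u) (relabel s x).
Proof.
move=> /forall_inP h; apply/forall_inP => _ /imsetP[Y Yu ->].
have /exists_inP [X Xx YX] := h Y Yu.
by apply/exists_inP; exists (s @: X); [apply: imset_f | apply: imsetS].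
Qed.

(* Two partitions with the same number of blocks of each size differ by a
   bijective relabelling of L: match blocks of equal size, then points. *)
Lemma same_nblocks_relabel x y : partition x [set: L] -> partition y [set: L] ->
  (forall k, nblocks y k = nblocks x k) ->
  exists2 s, injective s & relabel s y = x.
Proof.
move=> px py hc.
have [f [fB finj fsurj]] := fibre_matching hc.
have fx Y : Y \in y -> f Y \in x by case/fB.
have hc2 X : #|[set a in [set: L] | f (pblock y a) == X]| =
             #|[set b in [set: L] | pblock x b == X]|.
  have [Xx | Xnx] := boolP (X \in x).
    have [Y Yy <-] := fsurj X Xx.
    have -> : [set a in [set: L] | f (pblock y a) == f Y] = Y.
      by apply/setP => a; rewrite !inE (inj_in_eq finj) ?part_pblockE ?part_pblock_mem.
    have -> : [set b in [set: L] | pblock x b == f Y] = f Y.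
      by apply/setP => b; rewrite !inE part_pblockE ?fx.
    by case: (fB Y Yy).
  have -> : [set a in [set: L] | f (pblock y a) == X] = set0.
    by apply/setP => a; rewrite !inE; apply: contraNF Xnx => /eqP <-; apply/fx/part_pblock_mem.
  have -> : [set b in [set: L] | pblock x b == X] = set0.
    by apply/setP => b; rewrite !inE; apply: contraNF Xnx => /eqP <-; apply: part_pblock_mem.
  by [].
have [s [sB sinj ssurj]] := fibre_matching hc2.
have sx a : pblock x (s a) = f (pblock y a) by case: (sB a (in_setT a)).
exists s; first by move=> a b; apply: sinj; rewrite inE.
have sY Y : Y \in y -> s @: Y = f Y.
  move=> Yy; apply/setP => b; apply/imsetP/idP => [[a aY ->]|bY].
    have <- : pblock y a = Y by apply/eqP; rewrite part_pblockE.
    by rewrite -sx part_mem_pblock.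
  have [a _ sa] := ssurj b (in_setT b); exists a => //.
  have : f (pblock y a) = f Y by rewrite -sx sa; apply/eqP; rewrite part_pblockE ?fx.
  by move/finj => <-; rewrite ?part_mem_pblock ?part_pblock_mem.
apply/setP => X; apply/imsetP/idP => [[Y Yy ->]|Xx]; first by rewrite sY ?fx.
by have [Y Yy fY] := fsurj X Xx; exists Y; rewrite ?sY.
Qed.

End Partitions.

Section Types.
Variables (L : finType) (n : nat).
Hypothesis hn : #|L| = n.
Implicit Types (u x y : {set {set L}}) (a b c : IP n).

(* Block sizes never exceed n, so [inord] acts faithfully on them. *)
Lemma card_lt_n (X : {set L}) : #|X| < n.+1.
Proof. by rewrite ltnS -hn max_card. Qed.

Lemma inord_cardE (X : {set L}) (k : 'I_n.+1) : (inord #|X| == k) = (#|X| == k).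
Proof. by rewrite -val_eqE /= inordK ?card_lt_n. Qed.

Lemma ptypeE x (k : 'I_n.+1) : partition x [set: L] -> ptype n x k = nblocks x k :> nat.
Proof.
move=> px; rewrite /ptype ffunE inordK // ltnS.
apply: leq_trans (subset_leq_card _) _; last by rewrite -hn; apply: part_card px.
by apply/subsetP => X; rewrite inE => /andP[].
Qed.

Lemma sum_ptype (w : nat -> nat) x : partition x [set: L] ->
  \sum_(k < n.+1) w k * ptype n x k = \sum_(X in x) w #|X|.
Proof.
move=> px; rewrite [RHS](partition_big (fun X : {set L} => inord #|X| : 'I_n.+1) xpredT) //=.
apply: eq_bigr => k _; rewrite ptypeE // mulnC -sum_nat_const.
apply: eq_big => [X | X]; rewrite inE ?inord_cardE //.
by case/andP => _ /eqP ->.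
Qed.

Lemma ptype_intpart x : partition x [set: L] -> ptype n x \in intparts n.
Proof.
move=> px; rewrite inE; apply/andP; split.
  apply/eqP/val_inj; rewrite /= ptypeE //; apply/eqP; rewrite cards_eq0; apply/eqP.
  apply/setP => X; rewrite !inE; apply/negbTE/negP => /andP[Xx].
  by rewrite cards_eq0 => /eqP X0; move: Xx; rewrite X0 (partition0 px).
rewrite (sum_ptype id px) -(card_partition px) cardsT hn.
by [].
Qed.

Lemma ptype_surj a : a \in intparts n -> exists2 x, partition x [set: L] & ptype n x = a.
Proof.
rewrite inE => /andP[/eqP a0 /eqP asum].
pose s := \big[cat/[::]]_(k < n.+1) nseq (a k) (nat_of_ord k).
have pos_s : all (leq 1) s.
  apply: (big_ind (fun s => all (leq 1) s)) => // [s1 s2 h1 h2 | k _].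
    by rewrite all_cat h1 h2.
  rewrite all_nseq; have [k0|] := posnP (nat_of_ord k); last by rewrite orbT.
  by rewrite (_ : k = ord0) ?a0 //; apply: val_inj.
have sum_s : sumn s = #|[set: L]|.
  rewrite cardsT hn -[RHS]asum /s (big_morph sumn sumn_cat (erefl (sumn [::]))).
  by apply: eq_bigr => k _; rewrite sumn_nseq.
have [x px cx] := partition_with_sizes pos_s sum_s.
exists x => //; apply/ffunP => k; apply/val_inj; rewrite /= ptypeE // cx.
rewrite /s (big_morph (count_mem (nat_of_ord k)) (count_cat _) (erefl (count_mem (nat_of_ord k) [::]))).
rewrite (bigD1 k) //= count_nseq /= eqxx mul1n big1 ?addn0 // => i ik.
by rewrite count_nseq /= (inj_eq val_inj) (negbTE ik).
Qed.

Lemma ptype_onto : ptype n @: setparts L = intparts n.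
Proof.
apply/setP => a; apply/imsetP/idP => [[x] | /ptype_surj [x px <-]].
  by rewrite inE => px ->; apply: ptype_intpart.
by exists x; rewrite ?inE.
Qed.

Lemma same_ptype_relabel x y : partition x [set: L] -> partition y [set: L] ->
  ptype n x = ptype n y -> exists2 s, injective s & relabel s y = x.
Proof.
move=> px py e; apply: same_nblocks_relabel => // k.
have [kn | nk] := ltnP k n.+1.
  by have := congr1 (fun m : IP n => nat_of_ord (m (Ordinal kn))) e; rewrite /= !ptypeE.
suff big : forall z : {set {set L}}, nblocks z k = 0 by rewrite !big.
move=> z; apply/eqP; rewrite cards_eq0; apply/eqP/setP => X; rewrite !inE.
by apply/negbTE; rewrite negb_and; apply/orP; right; rewrite neq_ltn (leq_trans (card_lt_n X)).
Qed.

Lemma irefinesP a b : irefines L a b <->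
  exists u x, [/\ partition u [set: L], partition x [set: L],
                  ptype n u = a, ptype n x = b & refines u x].
Proof.
split.
  case/exists_inP => u; rewrite inE => pu /exists_inP [x].
  by rewrite inE => px /and3P[/eqP ua /eqP xb r]; exists u, x.
case=> u [x [pu px ua xb r]]; apply/exists_inP; exists u; first by rewrite inE.
by apply/exists_inP; exists x; rewrite ?inE ?ua ?xb ?eqxx.
Qed.

Lemma ptype_mono u x : partition u [set: L] -> partition x [set: L] ->
  refines u x -> irefines L (ptype n u) (ptype n x).
Proof. by move=> pu px r; apply/irefinesP; exists u, x. Qed.

Lemma ptype_lift x a : partition x [set: L] -> irefines L a (ptype n x) ->
  exists u, [/\ partition u [set: L], ptype n u = a & refines u x].
Proof.
move=> px /irefinesP [u' [x' [pu' px' <- x'x r]]].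
have [s si <-] := same_ptype_relabel px px' (esym x'x).
exists (relabel s u'); split; first exact: relabel_partition.
  by apply/ffunP => k; rewrite !ffunE; congr inord; apply: relabel_nblocks.
exact: relabel_refines.
Qed.

Lemma irefines_refl a : a \in intparts n -> irefines L a a.
Proof. by case/ptype_surj => x px <-; apply: ptype_mono => //; apply: refines_refl. Qed.

Lemma irefines_trans a b c : irefines L a b -> irefines L b c -> irefines L a c.
Proof.
move=> iab /irefinesP [y [z [py pz yb zc r]]]; rewrite -yb in iab.
have [u [pu <- ru]] := ptype_lift py iab.
by rewrite -zc; apply: ptype_mono => //; apply: refines_trans ru r.
Qed.

(* The number of blocks is determined by the type, and strictly grows along a
   proper refinement; hence refinement of types is antisymmetric. *)
Lemma irefines_antisym a b : irefines L a b -> irefines L b a -> a = b.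
Proof.
move=> /irefinesP [u [x [pu px <- <- r]]] ixu.
have [w [pw wx rw]] := ptype_lift pu ixu.
have nblocks_card z : partition z [set: L] -> \sum_(k < n.+1) 1 * ptype n z k = #|z|.
  by move=> pz; rewrite (sum_ptype (fun=> 1)) // sum1_card.
have [cxu ux] := refines_card pu px r.
have [cuw _] := refines_card pw pu rw.
have cwx : #|w| = #|x| by rewrite -nblocks_card // -nblocks_card // wx.
by rewrite ux //; apply/eqP; rewrite eqn_leq cxu -cwx cuw.
Qed.

End Types.

Lemma ne_downsetsP (T : finType) (S : {set T}) (le : rel T) (D : {set T}) :
  D \in ne_downsets S le <->
  [/\ D != set0, D \subset S & forall x y, x \in D -> y \in S -> le y x -> y \in D].
Proof.
rewrite inE /is_downset; split.
  case/and3P => D0 DS /forall_inP h; split => // x y xD yS lyx.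
  by have /forall_inP /(_ y yS) /implyP := h x xD; apply.
case=> D0 DS h; rewrite D0 DS /=; apply/forall_inP => x xD; apply/forall_inP => y yS.
by apply/implyP; apply: h.
Qed.

Section DownsetTransfer.
Variables (T U : finType) (S : {set T}) (St : {set U}) (le : rel T) (lt : rel U).
Variable f : T -> U.
Hypothesis f_onto : f @: S = St.
Hypothesis f_mono : {in S &, forall x y, le x y -> lt (f x) (f y)}.
Hypothesis f_lift : forall x b, x \in S -> b \in St -> lt b (f x) ->
  exists2 y, y \in S & f y = b /\ le y x.
Implicit Types (D E : {set T}) (Dt Et : {set U}).

(* The preimage in S of a subset of St; it is the canonical lift of a down-set. *)
Definition preimage (Dt : {set U}) : {set T} := [set x in S | f x \in Dt].

(* Images of down-sets are down-sets: this is where lifting is used. *)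
Lemma image_downset D : D \in ne_downsets S le -> f @: D \in ne_downsets St lt.
Proof.
case/ne_downsetsP => D0 DS hD; apply/ne_downsetsP; split.
- by case/set0Pn: D0 => x xD; apply/set0Pn; exists (f x); apply: imset_f.
- by rewrite -f_onto imsetS.
- move=> _ b /imsetP[x xD ->] bSt lbx.
  have [y yS [<- lyx]] := f_lift (subsetP DS x xD) bSt lbx.
  by apply: imset_f; apply: hD lyx.
Qed.

Lemma image_preimage Dt : Dt \subset St -> f @: preimage Dt = Dt.
Proof.
move=> DtSt; apply/setP => b; apply/imsetP/idP => [[x] | bD].
  by rewrite inE => /andP[_ fxD] ->.
have /imsetP [x xS bfx] : b \in f @: S by rewrite f_onto (subsetP DtSt).
by exists x; rewrite // inE xS -bfx.
Qed.

Lemma preimage_downset Dt : Dt \in ne_downsets St lt -> preimage Dt \in ne_downsets S le.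
Proof.
case/ne_downsetsP => Dt0 DtSt hDt; apply/ne_downsetsP; split.
- by rewrite -(imset_eq0 f) image_preimage.
- by apply/subsetP => x; rewrite inE => /andP[].
- move=> x y; rewrite !inE => /andP[xS fxD] yS lyx; rewrite yS /=.
  by apply: hDt fxD _ (f_mono yS xS lyx); rewrite -f_onto imset_f.
Qed.

Lemma downsets_image : [set f @: (D : {set T}) | D in ne_downsets S le] = ne_downsets St lt.
Proof.
apply/setP => Dt; apply/imsetP/idP => [[D Dd ->] | Dtd]; first exact: image_downset.
exists (preimage Dt); first exact: preimage_downset.
by case/ne_downsetsP: Dtd => _ DtSt _; rewrite image_preimage.
Qed.

Lemma downsets_image_sub Dt Et : Dt \in ne_downsets St lt -> Et \in ne_downsets St lt ->
  (exists D E, [/\ D \in ne_downsets S le, E \in ne_downsets S le,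
                   f @: D = Dt, f @: E = Et & E \subset D])
  <-> Et \subset Dt.
Proof.
move=> Dtd Etd; split => [[D [E [_ _ <- <- ED]]] | EtDt]; first exact: imsetS.
exists (preimage Dt), (preimage Et); split; rewrite ?preimage_downset //.
- by case/ne_downsetsP: Dtd => _ DtSt _; rewrite image_preimage.
- by case/ne_downsetsP: Etd => _ EtSt _; rewrite image_preimage.
- by apply/subsetP => x; rewrite !inE => /andP[-> /(subsetP EtDt)].
Qed.

(* Lifting property of the induced map on down-sets, ordered by reverse
   inclusion: it makes the next level an instance of the same principle. *)
Lemma downsets_lift D Et : D \in ne_downsets S le -> Et \in ne_downsets St lt ->
  f @: D \subset Et -> exists2 E, E \in ne_downsets S le & f @: E = Et /\ D \subset E.
Proof.
move=> Dd Etd DEt; exists (preimage Et); first exact: preimage_downset.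
case/ne_downsetsP: Etd => _ EtSt _; split; first exact: image_preimage.
case/ne_downsetsP: Dd => _ DS _; apply/subsetP => x xD.
by rewrite inE (subsetP DS) // (subsetP DEt) ?imset_f.
Qed.

End DownsetTransfer.

Section Levels.
Variables (L : finType) (n : nat).
Hypothesis hn : #|L| = n.

Lemma ptype_mono_in : {in setparts L &, forall u x,
  refines u x -> irefines L (ptype n u) (ptype n x)}.
Proof. by move=> u x; rewrite !inE; apply: ptype_mono. Qed.

Lemma ptype_lift_in x a : x \in setparts L -> a \in intparts n ->
  irefines L a (ptype n x) -> exists2 u, u \in setparts L & ptype n u = a /\ refines u x.
Proof.
rewrite inE => px _ /(ptype_lift hn px) [u [pu ua ux]].
by exists u; rewrite ?inE.
Qed.

Lemma ptypeII_onto : [set ptypeII n A | A in PII L] = PtII L n.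
Proof. exact: downsets_image (ptype_onto hn) ptype_mono_in ptype_lift_in. Qed.

(* Level III: ptypeII from (P_II, reverse inclusion) onto (P~_II, reverse
   inclusion), whose nonempty down-sets are the nonempty up-sets for inclusion. *)
Lemma ptypeII_mono_in : {in PII L &, forall A B : {set {set {set L}}},
  B \subset A -> ptypeII n B \subset ptypeII n A}.
Proof. by move=> A B _ _; apply: imsetS. Qed.

Lemma ptypeII_lift_in A tB : A \in PII L -> tB \in PtII L n ->
  ptypeII n A \subset tB ->
  exists2 B, B \in PII L & ptypeII n B = tB /\ A \subset B.
Proof. by move=> Ad tBd; apply: (downsets_lift (ptype_onto hn) ptype_mono_in Ad tBd). Qed.

End Levels.

Theorem corollary1 (L : finType) (n : nat) (hn : #|L| = n) :
  (* (a) irefines is a partial order on the integer partitions of n *)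
  [/\ (forall a, a \in intparts n -> irefines L a a),
      (forall a b, a \in intparts n -> b \in intparts n ->
         irefines L a b -> irefines L b a -> a = b) &
      (forall a b c, a \in intparts n -> b \in intparts n -> c \in intparts n ->
         irefines L a b -> irefines L b c -> irefines L a c)]
  /\
  (* (b) *)
  ([set ptypeII n A | A in PII L] = PtII L n /\
   forall tA tB, tA \in PtII L n -> tB \in PtII L n ->
     ((exists A B, [/\ A \in PII L, B \in PII L, ptypeII n A = tA,
                       ptypeII n B = tB & B \subset A])
      <-> tB \subset tA))
  /\
  (* (c) *)
  ([set ptypeIII n F | F in PIII L] = PtIII L n /\
   forall tF tG, tF \in PtIII L n -> tG \in PtIII L n ->
     ((exists F G, [/\ F \in PIII L, G \in PIII L, ptypeIII n F = tF,
                       ptypeIII n G = tG & G \subset F])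
      <-> tG \subset tF)).
Proof.
split; [split | split; split].
- exact: irefines_refl hn.
- by move=> a b _ _; apply: (irefines_antisym hn).
- by move=> a b c _ _ _; apply: (irefines_trans hn).
- exact: ptypeII_onto.
- exact: downsets_image_sub (ptype_onto hn) (ptype_mono_in n).
- exact: downsets_image (ptypeII_onto hn) (ptypeII_mono_in n) (ptypeII_lift_in hn).
- exact: downsets_image_sub (ptypeII_onto hn) (ptypeII_mono_in n).
Qed.
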